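(* Let $m$ and $K\ge0$ be integers with $2^K<m\le 2^{K+1}$, and let $n\ge0$ be an integer. Then the integer $$\prod_{j=1}^{m-1}\prod_{i=1}^{j}\frac{2n+i+j}{i+j}$$ is odd if and only if $n\equiv0\pmod{2^{K+1}}$ or $n\equiv -m\pmod{2^{K+1}}$.
   Context: This product equals the Hankel determinant $\det\left(C_{i+j+m}\right)_{i,j=0}^{n-1}$ of the Catalan numbers $C_k=\frac{1}{k+1}\binom{2k}{k}$, in particular it is an integer. *)

From mathcomp Require Import all_boot all_order all_algebra.
Set Implicit Arguments. Unset Strict Implicit. Unset Printing Implicit Defensive.
Import GRing.Theory Num.Theory.
Local Open Scope ring_scope.

Definition catalan_prod (m n : nat) : rat :=
  \prod_(1 <= j < m) \prod_(1 <= i < j.+1)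
     ((2 * n + i + j)%:R / (i + j)%:R).

From mathcomp Require Import all_boot all_order all_algebra.
From mathcomp Require Import zify.
Set Implicit Arguments. Unset Strict Implicit. Unset Printing Implicit Defensive.

(* Write the product as P(2n)/P(0) with P(y) = prod_{1<=i<=j<m} (y+i+j).  The
   exponent of p in P(y) is the sum over k of the number of pairs (i, j) with
   q = p^k dividing y+i+j; row j contributes the multiples of q in (y+j, y+2j],
   i.e. (y+2j)/q - (y+j)/q.  This row count is q-periodic in y and grows by one
   when j grows by q, so the whole count is an explicit function of y mod q and
   m mod q.  Among even y it is smallest at y = 0, which makes the quotient an
   integer, and for q = 2w the counts at y = 2n and y = 0 agree exactly when
   z = n mod w and r = m mod 2w are balanced: z = 0, or z + r <= w when r <= w,
   or z + r >= 2w when r > w.  For 2^K < m <= 2^(K+1), balance at w = 2^K and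
   w = 2^(K+1) forces 2^(K+1) | n or 2^(K+1) | n + m, and conversely these
   divisibilities give balance at every level. *)

Lemma sum_dvdn_interval q a L : 0 < q ->
  \sum_(0 <= i < L) (q %| a + i.+1) = (a + L) %/ q - a %/ q.
Proof.
move=> q_gt0; elim: L => [|L IHL]; first by rewrite big_geq // addn0 subnn.
rewrite big_nat_recr //= IHL addnS divnS //.
have : a %/ q <= (a + L) %/ q by rewrite leq_div2r ?leq_addr.
lia.
Qed.

Definition mult_count q m y :=
  \sum_(1 <= j < m) \sum_(1 <= i < j.+1) (q %| y + i + j).

Definition row_count q y j := (y + j.*2) %/ q - (y + j) %/ q.

Definition block_count q L y := \sum_(0 <= b < L) row_count q y b.

Lemma mult_count_rows q m y : 0 < q ->
  mult_count q m y = \sum_(0 <= j < m) row_count q y j.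
Proof.
move=> q_gt0; case: m => [|m]; first by rewrite /mult_count !big_geq.
rewrite big_ltn // [row_count q y 0]/row_count addn0 subnn add0n.
apply: eq_big_nat => j _; rewrite big_add1 /=.
under eq_bigr do rewrite addnAC.
by rewrite sum_dvdn_interval // /row_count -addnA addnn.
Qed.

Lemma row_countDl q y t j : 0 < q -> row_count q (y + t * q) j = row_count q y j.
Proof. by move=> q_gt0; rewrite /row_count ![y + t * q + _]addnAC !divnDMl // subnDr. Qed.

Lemma row_count_mod q y j : 0 < q -> row_count q y j = j %/ q + row_count q y (j %% q).
Proof.
move=> q_gt0; rewrite /row_count {1 2}(divn_eq j q).
set a := j %/ q; set b := j %% q.
rewrite doubleD -mul2n mulnA !addnA ![y + _ * q + _]addnAC !divnDMl //.
have : (y + b) %/ q <= (y + b.*2) %/ q by rewrite leq_div2r // leq_add2l -addnn leq_addr.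
lia.
Qed.

Lemma sum_nat_modn (g : nat -> nat) q m : 0 < q ->
  \sum_(0 <= j < m) g (j %% q) =
  m %/ q * \sum_(0 <= b < q) g b + \sum_(0 <= b < m %% q) g b.
Proof.
move=> q_gt0; rewrite {1}(divn_eq m q); have := ltn_pmod m q_gt0.
move: (m %/ q) (m %% q) => u r r_lt_q.
have period_sum k : k <= q -> \sum_(0 <= j < k) g (j %% q) = \sum_(0 <= b < k) g b.
  by move=> k_le_q; apply: eq_big_nat => j /andP[_ j_lt]; rewrite modn_small // (leq_trans j_lt).
elim: u => [|u IHu]; first by rewrite !mul0n add0n period_sum // ltnW.
rewrite mulSn -addnA (@big_cat_nat _ _ _ q) ?leq_addr //= period_sum //.
rewrite -{2}[q]add0n big_addn addKn.
by under [X in _ + X]eq_bigr do rewrite modnDr; rewrite IHu addnA.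
Qed.

Lemma mult_count_decomp q m y : 0 < q ->
  mult_count q m y = \sum_(0 <= j < m) j %/ q
    + m %/ q * block_count q q (y %% q) + block_count q (m %% q) (y %% q).
Proof.
move=> q_gt0; rewrite mult_count_rows //.
under eq_bigr do rewrite {1}(divn_eq y q) addnC row_countDl // row_count_mod //.
by rewrite big_split /= -addnA sum_nat_modn.
Qed.

Lemma divn_lt3 q x : 0 < q -> x < 3 * q -> x %/ q = (q <= x) + (q.*2 <= x).
Proof.
move=> q_gt0 x_lt; have := ltn_ceil x q_gt0; have := leq_divM x q.
have : x %/ q < 3 by rewrite ltn_divLR.
by case: (x %/ q) => [|[|[|k]]] //= _; lia.
Qed.

Lemma sum_nat_leq d L : \sum_(0 <= b < L) (d <= b) = L - d.
Proof.
elim: L => [|L IHL]; first by rewrite big_geq.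
by rewrite big_nat_recr //= IHL; case: leqP => /=; lia.
Qed.

Lemma sum_nat_leq_double d L : \sum_(0 <= b < L) (d <= b.*2) = L - uphalf d.
Proof.
elim: L => [|L IHL]; first by rewrite big_geq.
by rewrite big_nat_recr //= IHL; case: leqP => /=; lia.
Qed.

Lemma block_count_closed q L y : y < q -> L <= q ->
  block_count q L y + (L - (q - y)) = (L - uphalf (q - y)) + (L - uphalf (q.*2 - y)).
Proof.
move=> y_lt_q L_le_q.
have row_count_small b : b < L ->
    row_count q y b + (q - y <= b) = (q - y <= b.*2) + (q.*2 - y <= b.*2).
  move=> b_lt_L; rewrite /row_count !divn_lt3 //; lia.
rewrite -sum_nat_leq -!sum_nat_leq_double -big_split -big_split /=.
by apply: eq_big_nat => b /andP[_ /row_count_small].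
Qed.

Lemma block_count_full q y : y < q -> (~~ odd q -> ~~ odd y) ->
  block_count q q y = q./2.
Proof. by move=> y_lt_q; have := block_count_closed y_lt_q (leqnn q); lia. Qed.

Lemma block_count0 q L : 0 < q -> L <= q -> block_count q L 0 = L - uphalf q.
Proof. by move=> q_gt0 L_le_q; have := block_count_closed q_gt0 L_le_q; lia. Qed.

Lemma block_count_ge q L y : y < q -> L <= q -> (~~ odd q -> ~~ odd y) ->
  block_count q L 0 <= block_count q L y.
Proof.
move=> y_lt_q L_le_q; have q_gt0 : 0 < q by apply: leq_ltn_trans y_lt_q.
by rewrite block_count0 //; have := block_count_closed y_lt_q L_le_q; lia.
Qed.

Definition balanced w L z :=
  z = 0 \/ (L <= w /\ z + L <= w) \/ (w < L /\ w.*2 <= z + L).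

Lemma block_count_even_eq w L z : z < w -> L < w.*2 ->
  block_count w.*2 L z.*2 = block_count w.*2 L 0 <-> balanced w L z.
Proof.
move=> z_lt_w L_lt.
have z2_lt : z.*2 < w.*2 by rewrite ltn_double.
have w2_gt0 : 0 < w.*2 by apply: leq_ltn_trans z2_lt.
have := block_count_closed z2_lt (ltnW L_lt).
by rewrite (block_count0 w2_gt0 (ltnW L_lt)) -!doubleB !uphalf_double /balanced; lia.
Qed.

Lemma mult_count_ge q m n : 0 < q -> mult_count q m 0 <= mult_count q m n.*2.
Proof.
move=> q_gt0; rewrite !mult_count_decomp // mod0n.
have y_lt := ltn_pmod n.*2 q_gt0; have r_lt := ltn_pmod m q_gt0.
have y_even : ~~ odd q -> ~~ odd (n.*2 %% q).
  by move=> /negbTE q_even; rewrite odd_mod // odd_double.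
rewrite !block_count_full // leq_add2l.
exact: block_count_ge (ltnW r_lt) y_even.
Qed.

Lemma mult_count_even_eq w m n : 0 < w ->
  mult_count w.*2 m n.*2 = mult_count w.*2 m 0 <-> balanced w (m %% w.*2) (n %% w).
Proof.
move=> w_gt0; have q_gt0 : 0 < w.*2 by rewrite double_gt0.
have z_lt := ltn_pmod n w_gt0; have r_lt := ltn_pmod m q_gt0.
rewrite !mult_count_decomp // mod0n -!muln2 -muln_modl !muln2.
rewrite !block_count_full ?ltn_double ?odd_double // -!addnA.
rewrite -block_count_even_eq //.
by split => [/addnI/addnI | ->].
Qed.

Lemma dvdn_gap Q a b : Q %| a -> Q %| b -> a < b -> a + Q <= b.
Proof.
move=> /dvdnP[s ->] /dvdnP[t ->]; have [-> | Q_gt0] := posnP Q; first by rewrite !muln0.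
by rewrite ltn_pmul2r // -mulSnr leq_pmul2r.
Qed.

Lemma balanced_of_dvdn w m n : 0 < w -> w %| n \/ w.*2 %| n + m ->
  balanced w (m %% w.*2) (n %% w).
Proof.
move=> w_gt0 [w_dvd_n | w2_dvd_nm]; first by left; apply/eqP.
have w_dvd_w2 : w %| w.*2 by rewrite -mul2n dvdn_mull.
have : w %| n %% w + m %% w.*2.
  rewrite /dvdn modnDml -modnDmr modn_dvdm // modnDmr.
  exact: dvdn_trans w_dvd_w2 w2_dvd_nm.
have z_lt := ltn_pmod n w_gt0; have r_lt : m %% w.*2 < w.*2 by rewrite ltn_pmod ?double_gt0.
move: (n %% w) (m %% w.*2) z_lt r_lt => z r z_lt r_lt /dvdnP[c zr_eq] {w2_dvd_nm w_dvd_w2}.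
have c_lt3 : c < 3 by rewrite -(ltn_pmul2r w_gt0); lia.
by rewrite /balanced; case: c c_lt3 zr_eq => [|[|[|c]]] //= _; lia.
Qed.

Lemma balanced_of_dvdn_large Q w m n : 0 < w -> Q %| w -> m <= Q ->
  Q %| n \/ Q %| n + m -> balanced w (m %% w.*2) (n %% w).
Proof.
move=> w_gt0 Q_dvd_w m_le_Q Q_dvd; have Q_le_w := dvdn_leq w_gt0 Q_dvd_w.
have z_lt := ltn_pmod n w_gt0.
have m_lt_w2 : m < w.*2 by lia.
rewrite modn_small //.
have n_modQ : n %% w = n %[mod Q] := modn_dvdm n Q_dvd_w.
have {n_modQ} Q_dvd_z : Q %| n %% w \/ Q %| n %% w + m.
  by rewrite /dvdn -modnDml n_modQ modnDml; exact: Q_dvd.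
move: (n %% w) z_lt Q_dvd_z => z z_lt Q_dvd_z.
suff zm_le : z + m <= w by right; left; split => //; exact: leq_trans (leq_addl z m) zm_le.
case: Q_dvd_z => [Q_dvd_z | Q_dvd_zm].
  by apply: leq_trans (dvdn_gap Q_dvd_z Q_dvd_w z_lt); rewrite leq_add2l.
rewrite leqNgt; apply/negP => w_lt.
have zm_lt : z + m < w + Q by rewrite -addSn leq_add.
by move: (dvdn_gap Q_dvd_w Q_dvd_zm w_lt); rewrite leqNgt zm_lt.
Qed.

Lemma residue_of_balanced h m n : h < m <= h.*2 ->
  balanced h (m %% h.*2) (n %% h) -> balanced h.*2 (m %% h.*2.*2) (n %% h.*2) ->
  h.*2 %| n \/ h.*2 %| n + m.
Proof.
move=> /andP[h_lt_m m_le_Q] bal_h bal_Q.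
have h_dvd_Q : h %| h.*2 by rewrite -mul2n dvdn_mull.
have n_modh : n %% h.*2 < h -> n %% h = n %% h.*2.
  by move=> z_lt_h; rewrite -(modn_small z_lt_h) modn_dvdm.
rewrite /dvdn -modnDml; rewrite modn_small in bal_Q; last by lia.
have [m_eq_Q | m_lt_Q] : m = h.*2 \/ m < h.*2 by lia.
  by rewrite m_eq_Q /balanced in bal_Q; left; lia.
rewrite modn_small // in bal_h.
have [zm_eq_Q | zm_ne_Q] := eqVneq (n %% h.*2 + m) h.*2.
  by right; rewrite zm_eq_Q modnn.
left; move: (n %% h.*2) (n %% h) n_modh bal_h bal_Q zm_ne_Q.
by rewrite /balanced => z2 z1; lia.
Qed.

Lemma logn_prod p I r (P : pred I) (F : I -> nat) : (forall i, P i -> 0 < F i) ->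
  logn p (\prod_(i <- r | P i) F i) = \sum_(i <- r | P i) logn p (F i).
Proof.
move=> F_gt0; elim: r => [|i r IHr]; first by rewrite !big_nil logn1.
rewrite !big_cons; case: ifP => // Pi.
by rewrite lognM ?IHr ?F_gt0 ?prodn_cond_gt0.
Qed.

Lemma logn_count_dvd_widen p x B : prime p -> 0 < x -> x <= B ->
  logn p x = \sum_(1 <= k < B) (p ^ k %| x).
Proof.
move=> p_pr x_gt0 x_le_B; rewrite logn_count_dvd // (@big_cat_nat _ _ _ x 1 B) //=.
rewrite [X in _ + X]big_nat_cond [X in _ + X]big1 ?addn0 // => k /andP[/andP[x_le_k _] _].
by rewrite gtnNdvd // (leq_ltn_trans x_le_k) // ltn_expl ?prime_gt1.
Qed.

Definition pair_prod m y := \prod_(1 <= j < m) \prod_(1 <= i < j.+1) (y + i + j).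

Lemma pair_row_gt0 y j : 0 < \prod_(1 <= i < j.+1) (y + i + j).
Proof. by rewrite big_nat_cond prodn_cond_gt0 // => i /andP[/andP[i_gt0 _] _]; lia. Qed.

Lemma pair_prod_gt0 m y : 0 < pair_prod m y.
Proof. by rewrite prodn_gt0 // => j; apply: pair_row_gt0. Qed.

Lemma logn_pair_prod p m y B : prime p -> y + m.*2 <= B ->
  logn p (pair_prod m y) = \sum_(1 <= k < B) mult_count (p ^ k) m y.
Proof.
move=> p_pr y_le_B; rewrite /pair_prod /mult_count exchange_big_nat.
rewrite logn_prod => [|j _]; last exact: pair_row_gt0.
apply: eq_big_nat => j /andP[_ j_lt_m]; rewrite exchange_big_nat big_nat_cond.
rewrite logn_prod => [|i /andP[/andP[i_gt0 _] _]]; last by lia.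
rewrite [RHS]big_nat_cond; apply: eq_bigr => i /andP[/andP[i_gt0 i_le_j] _].
by apply: logn_count_dvd_widen => //; lia.
Qed.

Lemma pair_prod_dvd m n : pair_prod m 0 %| pair_prod m n.*2.
Proof.
apply/(dvdn_partP _ (pair_prod_gt0 m 0)) => p; rewrite mem_primes => /and3P[p_pr _ _].
rewrite p_part pfactor_dvdn ?pair_prod_gt0 //.
rewrite !(@logn_pair_prod p m _ (n.*2 + m.*2)) ?leq_addl //.
by apply: leq_sum => k _; rewrite mult_count_ge ?expn_gt0 ?prime_gt0.
Qed.

Lemma odd_pair_prod_quot m n :
  odd (pair_prod m n.*2 %/ pair_prod m 0) <->
  forall k, 0 < k < n.*2 + m.*2 -> mult_count (2 ^ k) m n.*2 = mult_count (2 ^ k) m 0.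
Proof.
set N := pair_prod m n.*2; set D := pair_prod m 0.
have D_gt0 : 0 < D := pair_prod_gt0 m 0.
have q_gt0 : 0 < N %/ D by rewrite divn_gt0 // dvdn_leq ?pair_prod_gt0 ?pair_prod_dvd.
have -> : odd (N %/ D) = (logn 2 (N %/ D) == 0).
  by rewrite eqn0Ngt logn_gt0 mem_primes q_gt0 dvdn2 negbK.
rewrite logn_div ?pair_prod_dvd // !(@logn_pair_prod 2 m _ (n.*2 + m.*2)) ?leq_addl //.
rewrite -sumnB => [|k _]; last by rewrite mult_count_ge ?expn_gt0.
rewrite sum_nat_seq_eq0; split => [/allP all0 k k_range | eq_k].
  apply/eqP; rewrite eqn_leq mult_count_ge ?expn_gt0 // andbT -subn_eq0.
  by have := all0 k; rewrite mem_index_iota => /(_ k_range).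
by apply/allP => k; rewrite mem_index_iota => /eq_k ->; rewrite subnn.
Qed.

Lemma balanced_pow2_of_residue K m n k : m <= 2 ^ K.+1 ->
  2 ^ K.+1 %| n \/ 2 ^ K.+1 %| n + m ->
  balanced (2 ^ k) (m %% (2 ^ k).*2) (n %% 2 ^ k).
Proof.
move=> m_le_Q Q_dvd; have [k_le_K | K_lt_k] := leqP k K.
  apply: balanced_of_dvdn; first by rewrite expn_gt0.
  have w2_dvd_Q : (2 ^ k).*2 %| 2 ^ K.+1 by rewrite -mul2n -expnS dvdn_exp2l.
  case: Q_dvd => [Q_dvd_n | Q_dvd_nm]; [left | right]; last exact: dvdn_trans Q_dvd_nm.
  exact: dvdn_trans (dvdn_exp2l 2 (leqW k_le_K)) Q_dvd_n.
by apply: (balanced_of_dvdn_large (Q := 2 ^ K.+1)); rewrite ?expn_gt0 ?dvdn_exp2l.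
Qed.

Local Open Scope ring_scope.
Import GRing.Theory Num.Theory.

Lemma catalan_prod_pair_prod m n :
  catalan_prod m n = (pair_prod m n.*2 %/ pair_prod m 0)%:R.
Proof.
have D_unit : (pair_prod m 0)%:R \is a @GRing.unit rat.
  by rewrite unitfE pnatr_eq0 -lt0n pair_prod_gt0.
rewrite natr_div ?pair_prod_dvd // /catalan_prod /pair_prod.
under eq_bigr do rewrite prodf_div.
by rewrite prodf_div !natr_prod; congr (_ / _); apply: eq_bigr => j _; rewrite natr_prod -?mul2n.
Qed.

Theorem corollary3p2 (m K n : nat) :
  (2 ^ K < m <= 2 ^ K.+1)%N ->
  exists N : nat, catalan_prod m n = N%:R /\
    (odd N <-> (n %% 2 ^ K.+1 = 0)%N \/ ((n + m) %% 2 ^ K.+1 = 0)%N).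
Proof.
move=> m_range; exists (pair_prod m n.*2 %/ pair_prod m 0)%N.
split; first exact: catalan_prod_pair_prod.
have level_eq k : mult_count (2 ^ k.+1) m n.*2 = mult_count (2 ^ k.+1) m 0 <->
    balanced (2 ^ k) (m %% (2 ^ k).*2) (n %% 2 ^ k).
  by rewrite expnS mul2n; apply: mult_count_even_eq; rewrite expn_gt0.
have residue_dvdn : (n %% 2 ^ K.+1 = 0)%N \/ ((n + m) %% 2 ^ K.+1 = 0)%N <->
    (2 ^ K.+1 %| n)%N \/ (2 ^ K.+1 %| n + m)%N.
  by rewrite /dvdn; split=> [] [/eqP | /eqP]; auto.
rewrite odd_pair_prod_quot residue_dvdn; split=> [eq_counts | Q_dvd [//|k] _].
  have K_lt : (K.+2 < n.*2 + m.*2)%N by have := ltn_expl K (ltnSn 1); lia.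
  have bal_K := (level_eq K).1 (eq_counts K.+1 (ltnW K_lt)).
  have bal_K1 := (level_eq K.+1).1 (eq_counts K.+2 K_lt).
  rewrite expnS mul2n in m_range bal_K1 *.
  exact: residue_of_balanced m_range bal_K bal_K1.
apply/level_eq; apply: balanced_pow2_of_residue Q_dvd.
by case/andP: m_range.
Qed.
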